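(* Let $V=[n]$. For every traceless self-adjoint operator $X$ on $\mathcal H_V$, $$\|X\|_{W_1}\le\|X\|_1+\|\mathrm{Tr}_1X\|_1+\|\mathrm{Tr}_{12}X\|_1+\dots+\|\mathrm{Tr}_{1\ldots n-1}X\|_1 .$$
   Context: Each site of $[n]$ carries a qudit $\mathbb C^d$; $\mathrm{Tr}_{1\ldots k}$ is the partial trace over sites $1,\dots,k$. Quantum Lipschitz constant: for self-adjoint $H$, $\|H\|_L:=2\max_{i\in V}\min\{\|H-H^{(i)}\|_\infty: H^{(i)}\text{ self-adjoint acting trivially on site }i\}$. Quantum $W_1$ norm: for traceless self-adjoint $X$, $\|X\|_{W_1}:=\max\{\mathrm{Tr}[XH]:H\text{ self-adjoint},\|H\|_L\le1\}$. *)

From HB Require Import structures.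
From mathcomp Require Import all_boot all_order all_algebra.
From mathcomp Require Import complex.
From mathcomp Require Import boolp classical_sets reals.

Set Implicit Arguments.
Unset Strict Implicit.
Unset Printing Implicit Defensive.

Import Order.TTheory GRing.Theory Num.Theory Num.Def.
Local Open Scope ring_scope.
Local Open Scope classical_set_scope.

Section Qudits.
Variable R : realType.
Local Notation C := (R[i]).

(* Computational basis of n qudits C^d : configurations 'I_n -> 'I_d.
   Site j of the paper (1 <= j <= n) is the ordinal j-1. *)
Definition cfg (n d : nat) := {ffun 'I_n -> 'I_d}.

(* Operators on H_V = (C^d)^{\otimes n}, as square complex matrices
   indexed by (the enumeration of) the computational basis. *)
Definition Op (n d : nat) := 'M[C]_(#|{: cfg n d}|).

Definition entry n d (A : Op n d) (x y : cfg n d) : C :=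
  A (enum_rank x) (enum_rank y).

Definition mkOp n d (f : cfg n d -> cfg n d -> C) : Op n d :=
  \matrix_(i, j) f (enum_val i) (enum_val j).

Definition selfadj n d (A : Op n d) : Prop := A ^T = map_mx conjC A.

Definition cabs2 (z : C) : R := complex.Re z ^+ 2 + complex.Im z ^+ 2.
Definition vnorm m (v : 'cV[C]_m) : R := Num.sqrt (\sum_i cabs2 (v i 0)).

Definition opnorm m (A : 'M[C]_m) : R :=
  sup [set vnorm (A *m v) | v in [set v : 'cV[C]_m | vnorm v = 1]].

Definition trnorm m (A : 'M[C]_m) : R :=
  \sum_i Num.sqrt (complex.Re (spectral_diag ((map_mx conjC A)^T *m A) 0 i)).

(* A acts trivially on site i : A = I_i (x) K for an operator K on the other
   sites; K is given by its matrix entries as a function of the restrictions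
   of the configurations to the sites different from i. *)
Definition acts_trivially n d (i : 'I_n) (A : Op n d) : Prop :=
  exists K : cfg n d -> cfg n d -> C,
    (forall x x' y y' : cfg n d,
        (forall j, j != i -> x j = x' j /\ y j = y' j) -> K x y = K x' y') /\
    (forall x y : cfg n d, entry A x y = (x i == y i)%:R * K x y).

Definition lipschitz n d (H : Op n d) : R :=
  2 * \big[Num.max/0]_(i < n)
        inf [set opnorm (H - Hi) |
               Hi in [set Hi : Op n d | selfadj Hi /\ acts_trivially i Hi]].

Definition W1norm n d (X : Op n d) : R :=
  sup [set complex.Re (\tr (X *m H)) |
         H in [set H : Op n d | selfadj H /\ lipschitz H <= 1]].

Lemma glue_subproof n k (i : 'I_n) : ~~ (i < k)%N -> (i - k < n - k)%N.
Proof.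
move=> hik; have hi := ltn_ord i; rewrite -leqNgt in hik.
by rewrite ltn_sub2r // (leq_ltn_trans hik hi).
Qed.

Definition glue n d k (z : cfg k d) (x : cfg (n - k) d) : cfg n d :=
  [ffun i : 'I_n =>
     match (i < k)%N as b return ((i < k)%N = b -> 'I_d) with
     | true => fun h => z (Ordinal h)
     | false => fun h => x (Ordinal (glue_subproof (negbT h)))
     end erefl].

Definition ptrace n d k (X : Op n d) : Op (n - k) d :=
  mkOp (fun x y => \sum_(z : cfg k d) entry X (glue z x) (glue z y)).

End Qudits.

(* Fix H with ||H||_L <= 1 and, for 0 <= k <= n, the reduced pairings
     F_k(M) = d^{-k} Tr[(Tr_{1..k} X)(Tr_{1..k} M)].
   Then F_0(H) = Tr[X H] and F_n(H) = d^{-n} Tr X Tr H = 0, so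
     Tr[X H] = sum_{i<n} (F_i(H) - F_{i+1}(H)).
   If H_i acts trivially on site i+1, then F_i(H_i) = F_{i+1}(H_i), so the
   i-th term equals F_i(H - H_i) - F_{i+1}(H - H_i).  By Hölder's inequality
   and because d^{-k} Tr_{1..k} does not increase the operator norm,
   |F_k(M)| <= T_k ||M||_oo with T_k = ||Tr_{1..k} X||_1 (and T_n = 0).
   Optimising over H_i bounds the i-th term by (T_i + T_{i+1}) / 2, and
   summing over i gives Tr[X H] <= sum_{k<n} T_k. *)

From HB Require Import structures.
From mathcomp Require Import all_boot all_order all_algebra.
From mathcomp Require Import complex.
From mathcomp Require Import boolp classical_sets reals.
From mathcomp Require Import ring lra.
Import Order.TTheory GRing.Theory Num.Theory Num.Def.
Set Implicit Arguments. Unset Strict Implicit. Unset Printing Implicit Defensive.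
Local Open Scope ring_scope.

Lemma sum_enum_rank (T : finType) (V : nmodType) (F : 'I_#|T| -> V) :
  \sum_i F i = \sum_(x : T) F (enum_rank x).
Proof. by rewrite (reindex (@enum_rank T)) //; apply: onW_bij; apply: enum_rank_bij. Qed.

Lemma sum_delta (T : finType) (S : pzSemiRingType) (x : T) (G : T -> S) :
  \sum_y (y == x)%:R * G y = G x.
Proof.
rewrite (bigD1 x) //= eqxx mul1r big1 ?addr0 // => y /negbTE->.
by rewrite mul0r.
Qed.

Section ComplexScalars.
Variable R : realType.
Local Notation C := (R[i]).

(* The real part is R-linear on C (canonical instance on [Rcomplex R]). *)
Local Notation ReL := (@complex.Re R : Rcomplex R -> R).

Lemma ReB (a b : C) : complex.Re (a - b) = complex.Re a - complex.Re b.
Proof. exact: (raddfB ReL). Qed.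

Lemma ReN (a : C) : complex.Re (- a) = - complex.Re a.
Proof. exact: (raddfN ReL). Qed.

Lemma Re_sum (I : Type) (r : seq I) (P : pred I) (F : I -> C) :
  complex.Re (\sum_(i <- r | P i) F i) = \sum_(i <- r | P i) complex.Re (F i).
Proof. exact: (raddf_sum ReL). Qed.

Lemma Re_realM (c : R) (z : C) : complex.Re ((c%:C)%C * z) = c * complex.Re z.
Proof. by case: z => a b /=; ring. Qed.

Lemma natC_inv (m : nat) : (m%:R : C)^-1 = (((m%:R : R)^-1)%:C)%C.
Proof. by rewrite fmorphV /= rmorph_nat. Qed.

Definition cmod (z : C) : R := Num.sqrt (cabs2 z).

Lemma cabs2_ge0 (z : C) : 0 <= cabs2 z.
Proof. by rewrite /cabs2 addr_ge0 // sqr_ge0. Qed.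

Lemma cmod_ge0 (z : C) : 0 <= cmod z. Proof. exact: sqrtr_ge0. Qed.

Lemma cmod_sqr (z : C) : cmod z ^+ 2 = cabs2 z.
Proof. by rewrite sqr_sqrtr // cabs2_ge0. Qed.

Lemma cabs2_eq0 (z : C) : cabs2 z = 0 -> z = 0.
Proof.
case: z => a b; rewrite /cabs2 /= => /eqP.
by rewrite paddr_eq0 ?sqr_ge0 // !sqrf_eq0 => /andP[/eqP-> /eqP->].
Qed.

Lemma cabs2_realM (c : R) (z : C) : cabs2 ((c%:C)%C * z) = c ^+ 2 * cabs2 z.
Proof. by case: z => a b; rewrite /cabs2 /=; ring. Qed.

Lemma cabs2_boolM (b : bool) (z : C) : cabs2 (b%:R * z) = b%:R * cabs2 z.
Proof. by case: b; rewrite ?mul1r ?mul0r // /cabs2 /= expr0n /= addr0. Qed.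

Lemma Re_conjM_self (a : C) : complex.Re (conjC a * a) = cabs2 a.
Proof. by case: a => a1 a2 /=; rewrite /cabs2 /=; ring. Qed.

Lemma cmod_normc (z : C) : cmod z = Normc.normc z.
Proof. by case: z. Qed.

Lemma cmodM (a b : C) : cmod (a * b) = cmod a * cmod b.
Proof. by rewrite !cmod_normc Normc.normcM. Qed.

Lemma cmod_sum (I : Type) (r : seq I) (P : pred I) (F : I -> C) :
  cmod (\sum_(i <- r | P i) F i) <= \sum_(i <- r | P i) cmod (F i).
Proof.
elim/big_rec2: _ => [|i y1 y2 _ IH].
  by rewrite /cmod /cabs2 /= expr0n /= addr0 sqrtr0.
by rewrite !cmod_normc in IH *; apply: le_trans (le_normcD _ _) _; rewrite lerD2l.
Qed.

Lemma le_sqrtM (x p q : R) : 0 <= p -> 0 <= q -> x ^+ 2 <= p * q ->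
  x <= Num.sqrt p * Num.sqrt q.
Proof.
move=> p0 q0 h; have [x0|x0] := leP x 0.
  by apply: le_trans x0 _; rewrite mulr_ge0 // sqrtr_ge0.
rewrite -sqrtrM // -(ger0_norm (ltW x0)) -sqrtr_sqr.
by rewrite ler_sqrt // mulr_ge0.
Qed.

Lemma Re_conjM_le (a b : C) : complex.Re (conjC a * b) <= cmod a * cmod b.
Proof.
case: a => a1 a2; case: b => b1 b2; rewrite /cmod /cabs2 /=.
apply: le_sqrtM; rewrite ?addr_ge0 ?sqr_ge0 //.
have : 0 <= (a1 * b2 - a2 * b1) ^+ 2 by apply: sqr_ge0.
rewrite !expr2; nra.
Qed.

End ComplexScalars.

(* Cauchy-Schwarz inequality for finite real sums, via Lagrange's identity
   sum_ij (x_i y_j - x_j y_i)^2 = 2 (|x|^2 |y|^2 - <x, y>^2). *)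
Lemma cauchy_schwarz_sqr (F : realFieldType) (I : finType) (x y : I -> F) :
  (\sum_i x i * y i) ^+ 2 <= (\sum_i x i ^+ 2) * (\sum_i y i ^+ 2).
Proof.
set A := \sum_i x i ^+ 2; set B := \sum_i y i ^+ 2; set S := \sum_i x i * y i.
have lagrange : \sum_i \sum_j (x i * y j - x j * y i) ^+ 2 = 2 * (A * B - S ^+ 2).
  have row_sum i : \sum_j (x i * y j - x j * y i) ^+ 2 =
      x i ^+ 2 * B + A * y i ^+ 2 - 2 * (x i * y i) * S.
    rewrite /A /B /S mulr_sumr mulr_suml mulr_sumr -!big_split -sumrB /=.
    by apply: eq_bigr => j _; ring.
  under eq_bigr do rewrite row_sum.
  rewrite sumrB big_split /= -!mulr_suml -?mulr_sumr -/A -/B -/S; ring.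
have : 0 <= \sum_i \sum_j (x i * y j - x j * y i) ^+ 2.
  by do 2!apply: sumr_ge0 => ? _; apply: sqr_ge0.
by rewrite lagrange pmulr_rge0 // subr_ge0.
Qed.

Lemma cauchy_schwarz (R : realType) (I : finType) (x y : I -> R) :
  \sum_i x i * y i <= Num.sqrt (\sum_i x i ^+ 2) * Num.sqrt (\sum_i y i ^+ 2).
Proof.
by apply: le_sqrtM; rewrite ?cauchy_schwarz_sqr // sumr_ge0 // => i _; apply: sqr_ge0.
Qed.

Local Open Scope classical_set_scope.
Section VectorsAndOperatorNorm.
Variable R : realType.
Local Notation C := (R[i]).

Definition dotc m (u w : 'cV[C]_m) : C := \sum_k conjC (u k 0) * w k 0.

Lemma dotcNl m (u w : 'cV[C]_m) : dotc (- u) w = - dotc u w.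
Proof. by rewrite /dotc -sumrN; apply: eq_bigr => k _; rewrite mxE rmorphN mulNr. Qed.

Lemma dotcNr m (u w : 'cV[C]_m) : dotc u (- w) = - dotc u w.
Proof. by rewrite /dotc -sumrN; apply: eq_bigr => k _; rewrite mxE mulrN. Qed.

Lemma vnorm_ge0 m (v : 'cV[C]_m) : 0 <= vnorm v.
Proof. exact: sqrtr_ge0. Qed.

Lemma vnorm0 m : vnorm (0 : 'cV[C]_m) = 0.
Proof. by rewrite /vnorm big1 ?sqrtr0 // => k _; rewrite mxE /cabs2 /= expr0n /= addr0. Qed.

Lemma vnormN m (v : 'cV[C]_m) : vnorm (- v) = vnorm v.
Proof.
rewrite /vnorm; congr Num.sqrt; apply: eq_bigr => k _.
by rewrite mxE; case: (v k 0) => a b; rewrite /cabs2 /= !sqrrN.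
Qed.

Lemma vnormZ m (c : R) (v : 'cV[C]_m) : 0 <= c ->
  vnorm ((c%:C)%C *: v) = c * vnorm v.
Proof.
move=> c0; rewrite /vnorm; under eq_bigr do rewrite mxE cabs2_realM.
by rewrite -mulr_sumr sqrtrM ?sqr_ge0 // sqrtr_sqr ger0_norm.
Qed.

Lemma vnorm_eq0 m (v : 'cV[C]_m) : vnorm v = 0 -> v = 0.
Proof.
move=> /eqP; rewrite sqrtr_eq0 => hle.
have /eqP : \sum_k cabs2 (v k 0) = 0.
  by apply/eqP; rewrite eq_le hle sumr_ge0 // => k _; apply: cabs2_ge0.
rewrite psumr_eq0 => [/allP hk|k _]; last exact: cabs2_ge0.
apply/matrixP => i j; rewrite ord1 mxE.
by apply: cabs2_eq0; apply/eqP; apply: hk; rewrite mem_index_enum.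
Qed.

Lemma vnorm_dotc m (v : 'cV[C]_m) : vnorm v = Num.sqrt (complex.Re (dotc v v)).
Proof.
by rewrite /dotc Re_sum; congr Num.sqrt; apply: eq_bigr => k _; rewrite Re_conjM_self.
Qed.

Lemma Re_dotc_le m (u w : 'cV[C]_m) : complex.Re (dotc u w) <= vnorm u * vnorm w.
Proof.
rewrite /dotc Re_sum; apply: le_trans (_ : _ <= \sum_k cmod (u k 0) * cmod (w k 0)) _.
  by apply: ler_sum => k _; apply: Re_conjM_le.
apply: le_trans (cauchy_schwarz (fun k => cmod (u k 0)) (fun k => cmod (w k 0))) _.
by rewrite /vnorm; under eq_bigr do rewrite cmod_sqr;
   under [X in _ * Num.sqrt X <= _]eq_bigr do rewrite cmod_sqr.
Qed.

Lemma abs_Re_dotc_le m (u w : 'cV[C]_m) :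
  `|complex.Re (dotc u w)| <= vnorm u * vnorm w.
Proof.
rewrite ler_norml Re_dotc_le andbT lerNl -ReN -dotcNl -(vnormN u).
exact: Re_dotc_le.
Qed.

Lemma cmod_le_vnorm m (w : 'cV[C]_m) k : cmod (w k 0) <= vnorm w.
Proof.
rewrite /cmod /vnorm ler_sqrt ?sumr_ge0 // => [|i _]; last exact: cabs2_ge0.
by rewrite (bigD1 k) //= lerDl sumr_ge0 // => i _; apply: cabs2_ge0.
Qed.

Lemma vnorm_le_sum m (w : 'cV[C]_m) : vnorm w <= \sum_k cmod (w k 0).
Proof.
have h0 : 0 <= \sum_k cmod (w k 0) by apply: sumr_ge0 => k _; apply: cmod_ge0.
rewrite /vnorm -(ger0_norm h0) -sqrtr_sqr ler_sqrt ?sqr_ge0 // expr2 mulr_suml.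
apply: ler_sum => k _; rewrite -cmod_sqr expr2 ler_wpM2l ?cmod_ge0 //.
by rewrite (bigD1 k) //= lerDl sumr_ge0 // => i _; apply: cmod_ge0.
Qed.

(* The set whose supremum defines the operator norm is bounded above
   (by the sum of the moduli of the entries), so [sup] is meaningful. *)
Lemma opnorm_set_ub m (M : 'M[C]_m) :
  has_ubound [set vnorm (M *m v) | v in [set v : 'cV[C]_m | vnorm v = 1]].
Proof.
exists (\sum_i \sum_j cmod (M i j)) => _ [v /= v1 <-].
apply: le_trans (vnorm_le_sum _) _; apply: ler_sum => i _.
rewrite mxE; apply: le_trans (cmod_sum _ _ _) _; apply: ler_sum => j _.
by rewrite cmodM -{2}(mulr1 (cmod (M i j))) ler_wpM2l ?cmod_ge0 // -v1 cmod_le_vnorm.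
Qed.

Lemma opnorm_ge0 m (M : 'M[C]_m) : 0 <= opnorm M.
Proof.
rewrite /opnorm; set S := (X in sup X).
have [[y Sy]|S0] := pselect (S !=set0); last by rewrite sup_out // => -[].
apply: le_trans (ub_le_sup (opnorm_set_ub M) Sy).
by case: Sy => v _ <-; apply: vnorm_ge0.
Qed.

Lemma opnorm_ub m (M : 'M[C]_m) (v : 'cV[C]_m) :
  vnorm (M *m v) <= opnorm M * vnorm v.
Proof.
have [v0|vn0] := eqVneq (vnorm v) 0.
  by rewrite (vnorm_eq0 v0) mulmx0 vnorm0 mulr0.
have vpos : 0 < vnorm v by rewrite lt0r vn0 vnorm_ge0.
set c := (vnorm v)^-1; have c0 : 0 <= c by rewrite invr_ge0 vnorm_ge0.
have unit_cv : vnorm ((c%:C)%C *: v) = 1 by rewrite vnormZ // mulVf.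
have := ub_le_sup (opnorm_set_ub M) (ex_intro2 _ _ _ unit_cv erefl).
by rewrite -scalemxAr vnormZ // -ler_pdivrMr // mulrC.
Qed.

Lemma opnorm_form_bound m (M : 'M[C]_m) (u w : 'cV[C]_m) :
  `|complex.Re (dotc u (M *m w))| <= opnorm M * (vnorm u * vnorm w).
Proof.
apply: le_trans (abs_Re_dotc_le _ _) _.
by rewrite mulrCA ler_wpM2l ?vnorm_ge0 // opnorm_ub.
Qed.

End VectorsAndOperatorNorm.
Local Close Scope classical_set_scope.

Section Holder.
Variable R : realType.
Local Notation C := (R[i]).

Definition adj m n (A : 'M[C]_(m, n)) : 'M[C]_(n, m) := map_mx conjC (A^T).

Lemma adjE m n (A : 'M[C]_(m, n)) : (map_mx conjC A)^T = adj A.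
Proof. by rewrite /adj map_trmx. Qed.

Lemma adjM m n p (A : 'M[C]_(m, n)) (B : 'M[C]_(n, p)) :
  adj (A *m B) = adj B *m adj A.
Proof. by rewrite /adj trmx_mul map_mxM. Qed.

Lemma adjK m n (A : 'M[C]_(m, n)) : adj (adj A) = A.
Proof. by apply/matrixP => i j; rewrite !mxE conjCK. Qed.

Lemma adj_col m n (A : 'M[C]_(m, n)) j : adj (col j A) = row j (adj A).
Proof. by apply/matrixP => i k; rewrite !mxE. Qed.

Lemma dotc_mx m (x y : 'cV[C]_m) : dotc x y = (adj x *m y) 0 0.
Proof. by rewrite mxE; apply: eq_bigr => k _; rewrite !mxE. Qed.

Lemma row_mul_col m n p (X : 'M[C]_(m, n)) (Y : 'M[C]_(n, p)) i j :
  (row i X *m col j Y) 0 0 = (X *m Y) i j.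
Proof. by rewrite !mxE; apply: eq_bigr => k _; rewrite !mxE. Qed.

Lemma col_mul m n p (A : 'M[C]_(m, n)) (B : 'M[C]_(n, p)) j :
  A *m col j B = col j (A *m B).
Proof. by rewrite !colE mulmxA. Qed.

(* Write Z^* Z = U^* diag(lam) U with U unitary and let u_i be the columns
   of U^*; then Tr(Z N) = sum_i <u_i, N Z u_i> with |u_i| = 1 and
   |Z u_i| = sqrt(lam_i), the i-th singular value of Z. *)
Lemma holder_Re m (Z N : 'M[C]_m) (c : R) :
  (forall u w : 'cV[C]_m, complex.Re (dotc u (N *m w)) <= c * (vnorm u * vnorm w)) ->
  complex.Re (\tr (Z *m N)) <= c * trnorm Z.
Proof.
move=> hN; set Q := (map_mx conjC Z)^T *m Z.
have QE : Q = adj Z *m Z by rewrite /Q adjE.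
have Qnormal : Q \is normalmx by apply/normalmxP; rewrite -/(adj Q) QE adjM adjK.
have hQ := orthomx_spectralP Qnormal.
set P := spectralmx Q in hQ; set lam := spectral_diag Q in hQ.
have PU : P \is unitarymx by apply: spectral_unitarymx.
have PPadj : P *m adj P = 1%:M by apply/unitarymxP.
have invP : invmx P = adj P by rewrite invmx_unitary.
have PadjP : adj P *m P = 1%:M by rewrite -invP mulVmx // unitarymx_unit.
have diagQ : P *m Q *m adj P = diag_mx lam.
  by rewrite {1}hQ invP !mulmxA PPadj mul1mx -mulmxA PPadj mulmx1.
set u := fun i => col i (adj P).
have adj_u i : adj (u i) = row i P by rewrite /u adj_col adjK.
have u_unit i : vnorm (u i) = 1.
  by rewrite vnorm_dotc dotc_mx adj_u /u row_mul_col PPadj mxE eqxx sqrtr1.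
have Zu_norm i : vnorm (Z *m u i) = Num.sqrt (complex.Re (lam 0 i)).
  rewrite vnorm_dotc dotc_mx adjM adj_u /u [Z *m _]col_mul -mulmxA.
  by rewrite [adj Z *m _]col_mul row_mul_col !mulmxA -(mulmxA P) -QE diagQ mxE eqxx.
have term i : dotc (u i) (N *m (Z *m u i)) = (P *m (N *m Z *m adj P)) i i.
  by rewrite dotc_mx adj_u /u 2!col_mul row_mul_col !mulmxA.
have trace_split : \tr (Z *m N) = \sum_i dotc (u i) (N *m (Z *m u i)).
  symmetry; under eq_bigr do rewrite term.
  by rewrite -/(\tr _) mxtrace_mulC -(mulmxA (N *m Z)) PadjP mulmx1 mxtrace_mulC.
rewrite trace_split Re_sum /trnorm -/Q -/lam mulr_sumr.
by apply: ler_sum => i _; apply: le_trans (hN _ _) _; rewrite u_unit mul1r Zu_norm.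
Qed.

Lemma holder m (Z N : 'M[C]_m) (c : R) :
  (forall u w : 'cV[C]_m, `|complex.Re (dotc u (N *m w))| <= c * (vnorm u * vnorm w)) ->
  `|complex.Re (\tr (Z *m N))| <= c * trnorm Z.
Proof.
move=> hN; rewrite ler_norml; apply/andP; split.
  rewrite lerNl -ReN -raddfN -mulmxN /=; apply: holder_Re => u w.
  by rewrite mulNmx dotcNr ReN lerNl; apply: lerNnormlW.
by apply: holder_Re => u w; apply: le_trans (hN u w); apply: ler_norm.
Qed.

Lemma trnorm_ge0 m (A : 'M[C]_m) : 0 <= trnorm A.
Proof. by apply: sumr_ge0 => i _; apply: sqrtr_ge0. Qed.

End Holder.

Section Configurations.
Variable R : realType.
Local Notation C := (R[i]).

Lemma entry_mkOp n d (f : cfg n d -> cfg n d -> C) x y : entry (mkOp f) x y = f x y.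
Proof. by rewrite /entry /mkOp mxE !enum_rankK. Qed.

Lemma trace_entry n d (A : Op R n d) : \tr A = \sum_x entry A x x.
Proof. exact: sum_enum_rank. Qed.

Lemma trace_mul_entry n d (A B : Op R n d) :
  \tr (A *m B) = \sum_x \sum_y entry A x y * entry B y x.
Proof.
by rewrite trace_entry; apply: eq_bigr => x _; rewrite /entry mxE sum_enum_rank.
Qed.

Section Glue.
Variables n d k : nat.
Hypothesis hk : (k <= n)%N.

Lemma glue_lo (z : cfg k d) (x : cfg (n - k) d) (i : 'I_n) (j : 'I_k) :
  val i = val j -> glue z x i = z j.
Proof.
move=> e; rewrite ffunE; have lt_ik : (i < k)%N by rewrite e ltn_ord.
generalize (erefl (i < k)%N); generalize (i < k)%N at 2 3.
by case=> h; [congr (z _); apply: val_inj | rewrite h in lt_ik].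
Qed.

Lemma glue_hi (z : cfg k d) (x : cfg (n - k) d) (i : 'I_n) (j : 'I_(n - k)) :
  val i = (k + val j)%N -> glue z x i = x j.
Proof.
move=> e; rewrite ffunE; have ge_ik : (i < k)%N = false by rewrite e ltnNge leq_addr.
generalize (erefl (i < k)%N); generalize (i < k)%N at 2 3.
case=> h; first by rewrite h in ge_ik.
by congr (x _); apply: val_inj => /=; rewrite e addnC addnK.
Qed.


Lemma hi_lt (j : 'I_(n - k)) : (k + j < n)%N.
Proof. by rewrite -ltn_subRL. Qed.

Lemma sub_lt (i : 'I_n) : (k <= i)%N -> (i - k < n - k)%N.
Proof. by move=> h; rewrite ltn_sub2r // (leq_ltn_trans h (ltn_ord i)). Qed.

Definition lo (x : cfg n d) : cfg k d := [ffun j : 'I_k => x (widen_ord hk j)].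
Definition hi (x : cfg n d) : cfg (n - k) d := [ffun j => x (Ordinal (hi_lt j))].

Lemma lo_glue z x : lo (glue z x) = z.
Proof. by apply/ffunP => j; rewrite ffunE (glue_lo _ _ (j := j)). Qed.

Lemma hi_glue z x : hi (glue z x) = x.
Proof. by apply/ffunP => j; rewrite ffunE (glue_hi _ _ (j := j)). Qed.

Lemma glue_lohi x : glue (lo x) (hi x) = x.
Proof.
apply/ffunP => i; have [h|h] := ltnP i k.
  by rewrite (glue_lo _ _ (j := Ordinal h)) // ffunE; congr (x _); apply: val_inj.
rewrite (glue_hi _ _ (j := Ordinal (sub_lt h))) /=; last by rewrite subnKC.
by rewrite ffunE; congr (x _); apply: val_inj => /=; rewrite subnKC.
Qed.

Lemma sum_glue (V : nmodType) (F : cfg n d -> V) :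
  \sum_x F x = \sum_(t : cfg k d) \sum_(a : cfg (n - k) d) F (glue t a).
Proof.
rewrite pair_big /= (reindex (fun p : cfg k d * cfg (n - k) d => glue p.1 p.2)) //.
apply: onW_bij; exists (fun x => (lo x, hi x)) => [[t a]|x] /=.
  by rewrite lo_glue hi_glue.
by rewrite glue_lohi.
Qed.

End Glue.
End Configurations.

(* The reduced pairings F_k(M) = d^{-k} Tr[(Tr_{1..k} X)(Tr_{1..k} M)].
   They are written on the full configuration space, so that F_k and
   F_{k+1} live on the same type; [pairing_ptrace] identifies them with
   the partial-trace expression. *)
Section ReducedPairing.
Variable R : realType.
Local Notation C := (R[i]).
Variables n d : nat.
Local Notation cfgn := (cfg n d).

Definition agree_lo (k : nat) (x y : cfgn) := [forall j : 'I_n, (j < k)%N ==> (x j == y j)].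
Definition agree_hi (k : nat) (x y : cfgn) := [forall j : 'I_n, (k <= j)%N ==> (x j == y j)].

Definition splice (k : nat) (w x : cfgn) : cfgn :=
  [ffun j : 'I_n => if (j < k)%N then w j else x j].

(* The entry (Tr_{1..k} M)(y|_{>k}, x|_{>k}), seen as a function of full
   configurations. *)
Definition ptrace_entry (k : nat) (M : Op R n d) (x y : cfgn) : C :=
  \sum_(w | agree_hi k w y) entry M w (splice k w x).

Definition pairing (X : Op R n d) (k : nat) (M : Op R n d) : C :=
  ((d ^ k)%:R)^-1 *
  \sum_x \sum_y (agree_lo k x y)%:R * entry X x y * ptrace_entry k M x y.

Lemma pairingB X k (A B : Op R n d) : pairing X k (A - B) = pairing X k A - pairing X k B.
Proof.
rewrite /pairing -mulrBr -sumrB; congr (_ * _); apply: eq_bigr => x _.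
rewrite -sumrB; apply: eq_bigr => y _; rewrite -mulrBr; congr (_ * _).
by rewrite /ptrace_entry -sumrB; apply: eq_bigr => w _; rewrite /entry !mxE.
Qed.

Section GlueK.
Variable k : nat.
Hypothesis hk : (k <= n)%N.

Lemma agree_lo_glue (t t' : cfg k d) (a b : cfg (n - k) d) :
  agree_lo k (glue t a) (glue t' b) = (t == t').
Proof.
apply/forallP/eqP => [h|<- j]; last first.
  by apply/implyP => hj; rewrite !(glue_lo _ _ (j := Ordinal hj)).
apply/ffunP => j; have := h (widen_ord hk j).
by rewrite /= ltn_ord /= => /eqP; rewrite !(glue_lo _ _ (j := j)).
Qed.

Lemma agree_hi_glue (s t : cfg k d) (c b : cfg (n - k) d) :
  agree_hi k (glue s c) (glue t b) = (c == b).
Proof.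
apply/forallP/eqP => [h|<- j]; last first.
  by apply/implyP => hj; rewrite !(glue_hi _ _ (j := Ordinal (sub_lt hj))) //= subnKC.
apply/ffunP => j; have := h (Ordinal (hi_lt j)).
by rewrite /= leq_addr /= => /eqP; rewrite !(glue_hi _ _ (j := j)).
Qed.

Lemma splice_glue (s t : cfg k d) (c a : cfg (n - k) d) :
  splice k (glue s c) (glue t a) = glue s a.
Proof.
apply/ffunP => j; rewrite ffunE; have [hj|hj] := ltnP j k.
  by rewrite !(glue_lo _ _ (j := Ordinal hj)).
by rewrite !(glue_hi _ _ (j := Ordinal (sub_lt hj))) //= subnKC.
Qed.

Lemma ptrace_entry_glue M (t : cfg k d) (a b : cfg (n - k) d) :
  ptrace_entry k M (glue t a) (glue t b) = entry (ptrace k M) b a.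
Proof.
rewrite entry_mkOp /ptrace_entry big_mkcond (sum_glue hk) /=; apply: eq_bigr => s _.
under eq_bigr do rewrite agree_hi_glue splice_glue.
by rewrite -big_mkcond big_pred1_eq.
Qed.

Lemma pairing_ptrace X M :
  pairing X k M = ((d ^ k)%:R)^-1 * \tr (ptrace k X *m ptrace k M).
Proof.
rewrite /pairing trace_mul_entry; congr (_ * _).
rewrite (sum_glue hk); under eq_bigr do under eq_bigr do rewrite (sum_glue hk).
have diagonal (t : cfg k d) (a : cfg (n - k) d) :
  \sum_(t' : cfg k d) \sum_(b : cfg (n - k) d)
     (agree_lo k (glue t a) (glue t' b))%:R * entry X (glue t a) (glue t' b) *
     ptrace_entry k M (glue t a) (glue t' b) =
  \sum_b entry X (glue t a) (glue t b) * entry (ptrace k M) b a.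
  rewrite (bigD1 t) //= [X in _ + X]big1 ?addr0 => [|t' ht'].
    by apply: eq_bigr => b _; rewrite agree_lo_glue eqxx mul1r ptrace_entry_glue.
  by apply: big1 => b _; rewrite agree_lo_glue eq_sym (negbTE ht') !mul0r.
under eq_bigr do under eq_bigr do rewrite diagonal.
rewrite exchange_big; apply: eq_bigr => a _; rewrite exchange_big; apply: eq_bigr => b _.
by rewrite -mulr_suml [entry (ptrace k X) a b]entry_mkOp.
Qed.

End GlueK.

Lemma pairing0 X M : pairing X 0 M = \tr (X *m M).
Proof.
rewrite /pairing expn0 invr1 mul1r trace_mul_entry.
apply: eq_bigr => x _; apply: eq_bigr => y _.
have -> : agree_lo 0 x y by apply/forallP.
have agree_all w : agree_hi 0 w y = (w == y).
  apply/forallP/eqP => [h|-> j]; last exact/implyP.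
  by apply/ffunP => j; have /eqP := h j.
rewrite mul1r /ptrace_entry (eq_bigl _ _ agree_all) big_pred1_eq.
by congr (_ * entry M y _); apply/ffunP => j; rewrite ffunE.
Qed.

(* F_n(M) = d^{-n} Tr X Tr M, which vanishes for traceless X. *)
Lemma pairing_last X M : \tr X = 0 -> pairing X n M = 0.
Proof.
move=> trX; rewrite /pairing.
have agree_all x y : agree_lo n x y = (x == y).
  apply/forallP/eqP => [h|-> j]; last exact/implyP.
  by apply/ffunP => j; have := h j; rewrite ltn_ord => /eqP.
have full_trace x : ptrace_entry n M x x = \sum_w entry M w w.
  apply: eq_big => [w|w _]; first by apply/forallP => j; rewrite leqNgt ltn_ord.
  by congr (entry M w _); apply/ffunP => j; rewrite ffunE ltn_ord.
under eq_bigr do under eq_bigr do rewrite agree_all eq_sym -mulrA.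
under eq_bigr do rewrite sum_delta full_trace.
by rewrite -mulr_suml -(trace_entry X) trX mul0r mulr0.
Qed.

End ReducedPairing.

(* Invariance: if H acts trivially on site i+1 (ordinal i) then
   F_i(H) = F_{i+1}(H), since tracing out one more site of I (x) K just
   multiplies by d, which is compensated by the normalisation. *)
Section TrivialSite.
Variable R : realType.
Local Notation C := (R[i]).
Variables n d : nat.
Local Notation cfgn := (cfg n d).

Definition update (w : cfgn) (i : 'I_n) (c : 'I_d) : cfgn :=
  [ffun j => if j == i then c else w j].

Lemma update_update w i c c' : update (update w i c) i c' = update w i c'.
Proof. by apply/ffunP => j; rewrite !ffunE; case: (j == i). Qed.

Lemma update_id w i : update w i (w i) = w.
Proof. by apply/ffunP => j; rewrite !ffunE; case: eqP => // ->. Qed.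

Lemma update_eq w i c : (update w i c == w) = (w i == c).
Proof. by apply/eqP/eqP => [<-|<-]; [rewrite ffunE eqxx | apply: update_id]. Qed.

Lemma agree_lo_S (i : 'I_n) (x y : cfgn) :
  agree_lo i.+1 x y = agree_lo i x y && (x i == y i).
Proof.
apply/forallP/andP => [h|[/forallP h1 h2] j].
  split; last by have := h i; rewrite ltnSn.
  by apply/forallP => j; apply/implyP => hj; have /implyP := h j; apply; apply: ltnW.
apply/implyP; rewrite ltnS leq_eqVlt => /orP[e|hj].
  by have -> : j = i by apply: val_inj; apply/eqP.
by have /implyP := h1 j; apply.
Qed.

Lemma agree_hi_S (i : 'I_n) (x y : cfgn) :
  agree_hi i x y = agree_hi i.+1 x y && (x i == y i).
Proof.
apply/forallP/andP => [h|[/forallP h1 h2] j].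
  split; last by have := h i; rewrite leqnn.
  by apply/forallP => j; apply/implyP => hj; have /implyP := h j; apply; apply: ltnW.
apply/implyP; rewrite leq_eqVlt => /orP[e|hj].
  by have -> : j = i by apply: val_inj; apply/eqP; rewrite eq_sym.
by have /implyP := h1 j; apply.
Qed.

Lemma agree_hi_update (i : 'I_n) (w : cfgn) c (y : cfgn) :
  agree_hi i.+1 (update w i c) y = agree_hi i.+1 w y.
Proof.
apply: eq_forallb => j; case hj: (i < j)%N => //=.
by rewrite ffunE (_ : (j == i) = false) //; apply/eqP => e; rewrite e ltnn in hj.
Qed.

Section Kernel.
Variables (i : 'I_n) (H : Op R n d) (K : cfgn -> cfgn -> C).
Hypothesis K_local : forall x x' y y' : cfgn,
  (forall j, j != i -> x j = x' j /\ y j = y' j) -> K x y = K x' y'.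
Hypothesis H_tensor : forall x y : cfgn, entry H x y = (x i == y i)%:R * K x y.

Lemma ptrace_entry_offdiag (x y : cfgn) : x i != y i -> ptrace_entry i H x y = 0.
Proof.
move=> nxy; apply: big1 => w hw; rewrite H_tensor ffunE ltnn.
have /implyP/(_ (leqnn i))/eqP -> := forallP hw i.
by rewrite eq_sym (negbTE nxy) mul0r.
Qed.

Lemma ptrace_entry_S (x y : cfgn) : x i = y i ->
  ptrace_entry i.+1 H x y = ptrace_entry i H x y *+ d.
Proof.
move=> exy; set G := fun w => K w (splice i w x).
have trace_i : ptrace_entry i H x y = \sum_(w | agree_hi i w y) G w.
  apply: eq_bigr => w hw; rewrite H_tensor ffunE ltnn.
  have /implyP/(_ (leqnn i))/eqP -> := forallP hw i.
  by rewrite exy eqxx mul1r.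
have trace_Si :
    ptrace_entry i.+1 H x y = \sum_(w | agree_hi i.+1 w y) G (update w i (y i)).
  apply: eq_bigr => w hw; rewrite H_tensor ffunE ltnSn eqxx mul1r /G.
  apply: K_local => j hj; split; first by rewrite ffunE (negbTE hj).
  rewrite !ffunE (negbTE hj) ltnS leq_eqVlt.
  by rewrite (_ : (val j == val i) = false) //; apply/negbTE.
have fibre (c : 'I_d) :
    \sum_(w | agree_hi i.+1 w y && (w i == c)) G (update w i (y i)) =
    \sum_(w | agree_hi i w y) G w.
  rewrite (reindex_onto (fun w' => update w' i c) (fun w => update w i (y i))).
    apply: eq_big => [w|w /andP[_ /eqP ->] //].
    by rewrite agree_hi_update ffunE !eqxx andbT update_update update_eq agree_hi_S.
  by move=> w /andP[_ /eqP <-]; rewrite update_update update_id.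
rewrite trace_i trace_Si (partition_big (fun w : cfgn => w i) xpredT) //=.
by under eq_bigr do rewrite fibre; rewrite sumr_const card_ord.
Qed.

Lemma normalised_entry_S (x y : cfgn) : (0 < d)%N ->
  ((d ^ i)%:R)^-1 * ((agree_lo i x y)%:R * ptrace_entry i H x y) =
  ((d ^ i.+1)%:R)^-1 * ((agree_lo i.+1 x y)%:R * ptrace_entry i.+1 H x y).
Proof.
move=> d_gt0; rewrite agree_lo_S; case: (agree_lo i x y); last by rewrite !mul0r !mulr0.
have [exy|nxy] := eqVneq (x i) (y i); last first.
  by rewrite ptrace_entry_offdiag //= !(mul0r, mulr0).
have d0 : (d%:R : C) != 0 by rewrite pnatr_eq0 -lt0n.
rewrite /= !mul1r ptrace_entry_S // -mulr_natr !natrX exprS.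
by field; rewrite d0 expf_neq0.
Qed.

Lemma pairing_trivial_site (X : Op R n d) : (0 < d)%N ->
  pairing X i H = pairing X i.+1 H.
Proof.
move=> d_gt0; rewrite /pairing !mulr_sumr; apply: eq_bigr => x _.
rewrite !mulr_sumr; apply: eq_bigr => y _.
transitivity (entry X x y *
  (((d ^ i)%:R)^-1 * ((agree_lo i x y)%:R * ptrace_entry i H x y))); first by ring.
by rewrite normalised_entry_S //; ring.
Qed.

End Kernel.

(* When d = 0 and n > 0 there are no configurations and all pairings vanish. *)
Lemma pairing_acts_trivially (X H : Op R n d) (i : 'I_n) :
  acts_trivially i H -> pairing X i H = pairing X i.+1 H.
Proof.
case=> K [K_local H_tensor]; have [d0|d_gt0] := posnP d.
  have no_cfg (x : cfgn) : False by case: (x i) => m; rewrite d0.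
  by rewrite /pairing !big1 ?mulr0 // => x; case: (no_cfg x).
exact: (pairing_trivial_site K_local H_tensor).
Qed.

End TrivialSite.

(* The normalised partial trace d^{-k} Tr_{1..k} is a contraction for the
   operator norm: <u, Tr_{1..k}(M) w> = sum_s <s (x) u, M (s (x) w)> over the
   d^k basis states s of sites 1..k, and each term is at most ||M|| |u| |w|. *)
Section PartialTraceContraction.
Variable R : realType.
Local Notation C := (R[i]).
Variables n d k : nat.
Hypothesis hk : (k <= n)%N.

Local Notation Vec m := ('cV[C]_#|{: cfg m d}|).

(* The product vector |s> (x) u. *)
Definition embed (s : cfg k d) (u : Vec (n - k)) : Vec n :=
  \col_i ((lo hk (enum_val i) == s)%:R * u (enum_rank (hi k (enum_val i))) 0).

Lemma embedE s u (x : cfg n d) :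
  embed s u (enum_rank x) 0 = (lo hk x == s)%:R * u (enum_rank (hi k x)) 0.
Proof. by rewrite mxE enum_rankK. Qed.

Lemma vnorm_embed s u : vnorm (embed s u) = vnorm u.
Proof.
rewrite /vnorm; congr Num.sqrt.
rewrite !(sum_enum_rank (fun j => cabs2 (_ j 0))) (sum_glue hk).
under eq_bigr do under eq_bigr do rewrite embedE lo_glue hi_glue cabs2_boolM.
by under eq_bigr do rewrite -mulr_sumr; rewrite sum_delta.
Qed.

Lemma dotc_embed s u w (M : Op R n d) :
  dotc (embed s u) (M *m embed s w) =
  \sum_(a : cfg (n - k) d) \sum_(b : cfg (n - k) d)
     conjC (u (enum_rank a) 0) * (entry M (glue s a) (glue s b) * w (enum_rank b) 0).
Proof.
have Mw a : (M *m embed s w) (enum_rank (glue s a)) 0 =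
    \sum_(b : cfg (n - k) d) entry M (glue s a) (glue s b) * w (enum_rank b) 0.
  rewrite mxE sum_enum_rank (sum_glue hk) (bigD1 s) //= [X in _ + X]big1 ?addr0.
    by apply: eq_bigr => b _; rewrite embedE lo_glue hi_glue eqxx mul1r.
  by move=> t ts; apply: big1 => b _; rewrite embedE lo_glue (negbTE ts) mul0r mulr0.
rewrite /dotc sum_enum_rank (sum_glue hk) (bigD1 s) //= [X in _ + X]big1 ?addr0.
  apply: eq_bigr => a _; rewrite embedE lo_glue hi_glue eqxx mul1r Mw.
  by rewrite mulr_sumr.
move=> t ts; apply: big1 => a _.
by rewrite embedE lo_glue (negbTE ts) mul0r rmorph0 mul0r.
Qed.

Lemma ptrace_contraction (M : Op R n d) (u w : Vec (n - k)) :
  `|complex.Re (dotc u ((((d ^ k)%:R)^-1 *: ptrace k M) *m w))| <=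
     opnorm M * (vnorm u * vnorm w).
Proof.
have [dk0|dk_gt0] := posnP (d ^ k).
  rewrite dk0 invr0 scale0r mul0mx /dotc big1 => [|j _]; last by rewrite mxE mulr0.
  by rewrite normr0 mulr_ge0 ?opnorm_ge0 // mulr_ge0 ?vnorm_ge0.
have split_states : dotc u ((((d ^ k)%:R)^-1 *: ptrace k M) *m w) =
   ((d ^ k)%:R)^-1 * \sum_(s : cfg k d) dotc (embed s u) (M *m embed s w).
  under [X in _ = _ * X]eq_bigr do rewrite dotc_embed.
  rewrite -scalemxAl /dotc sum_enum_rank exchange_big mulr_sumr; apply: eq_bigr => a _.
  rewrite mxE [(_ *m w) _ _]mxE sum_enum_rank [in RHS]exchange_big mulrCA.
  congr (_ * _); rewrite mulr_sumr; apply: eq_bigr => b _.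
  rewrite -[ptrace k M _ _]/(entry (ptrace k M) a b) entry_mkOp mulr_suml mulr_sumr.
  by apply: eq_bigr => s _; ring.
have each_state (s : cfg k d) :
    `|complex.Re (dotc (embed s u) (M *m embed s w))| <= opnorm M * (vnorm u * vnorm w).
  by rewrite -(vnorm_embed s u) -(vnorm_embed s w) opnorm_form_bound.
rewrite split_states natC_inv Re_realM Re_sum normrM.
rewrite ger0_norm ?invr_ge0 ?ler0n // ler_pdivrMl ?ltr0n //.
apply: le_trans (ler_norm_sum _ _ _) _; apply: le_trans (ler_sum _ (fun s _ => each_state s)) _.
have count_states (B : R) : \sum_(s : cfg k d) B = B *+ (d ^ k).
  by rewrite sumr_const card_ffun !card_ord.
by rewrite count_states mulr_natl.
Qed.

End PartialTraceContraction.

Lemma sum_avg_consecutive_le (F : realFieldType) (g : nat -> F) (m : nat) :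
  g m <= g 0 -> \sum_(i < m) (g i + g i.+1) / 2 <= \sum_(i < m) g i.
Proof.
move=> gm_le_g0; have shift : g 0 + \sum_(i < m) g i.+1 = \sum_(i < m) g i + g m.
  by transitivity (\sum_(i < m.+1) g i); [rewrite big_ord_recl | rewrite big_ord_recr].
rewrite -mulr_suml big_split /= ler_pdivrMr //; lra.
Qed.

Local Open Scope classical_set_scope.

Definition site_dist (R : realType) n d (i : 'I_n) (H : Op R n d) : R :=
  inf [set opnorm (H - Hi) |
         Hi in [set Hi : Op R n d | selfadj Hi /\ acts_trivially i Hi]].

Lemma site_dist_le_lipschitz (R : realType) n d (i : 'I_n) (H : Op R n d) :
  2 * site_dist i H <= lipschitz H.
Proof.
by rewrite /lipschitz ler_pM2l // (le_bigmax 0 (fun i : 'I_n => site_dist i H)).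
Qed.

Lemma le_mul_inf (R : realType) (E : set R) (t b : R) : 0 <= b -> E !=set0 ->
  (forall e, E e -> t <= b * e) -> t <= b * inf E.
Proof.
move=> b0 [e0 Ee0] lbE; have [b_eq0|bn0] := eqVneq b 0.
  by have := lbE e0 Ee0; rewrite b_eq0 !mul0r.
have b_gt0 : 0 < b by rewrite lt0r bn0.
rewrite -ler_pdivrMl //; apply: lb_le_inf; first by exists e0.
by move=> e Ee; rewrite ler_pdivrMl // lbE.
Qed.

Section Telescoping.
Variable R : realType.
Variables n d : nat.
Variable X : Op R n d.
Hypothesis trX : \tr X = 0.

Definition reduced_norm (k : nat) : R :=
  if (n <= k)%N then 0 else if k is 0 then trnorm X else trnorm (ptrace k X).

Lemma reduced_norm_ge0 k : 0 <= reduced_norm k.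
Proof. by rewrite /reduced_norm; case: ifP => // _; case: k => *; apply: trnorm_ge0. Qed.

(* |F_k(M)| <= T_k ||M||_oo, by Hölder and the contraction property. *)
Lemma pairing_bound k (M : Op R n d) : (k <= n)%N ->
  `|complex.Re (pairing X k M)| <= reduced_norm k * opnorm M.
Proof.
move=> le_kn; rewrite /reduced_norm; case: leqP => [le_nk|lt_kn].
  have -> : k = n by apply/eqP; rewrite eqn_leq le_kn le_nk.
  by rewrite pairing_last // normr0 mul0r.
case: k le_kn lt_kn => [|k] _ lt_kn.
  by rewrite pairing0 mulrC; apply: holder => u w; apply: opnorm_form_bound.
rewrite (pairing_ptrace (ltnW lt_kn)) -mxtraceZ scalemxAr mulrC.
by apply: holder => u w; apply: (ptrace_contraction (ltnW lt_kn)).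
Qed.

(* One telescoping step: replacing H by H - H_i with H_i trivial on site
   i+1 leaves F_i(H) - F_{i+1}(H) unchanged; then optimise over H_i. *)
Lemma pairing_step (H : Op R n d) (i : 'I_n) :
  complex.Re (pairing X i H) - complex.Re (pairing X i.+1 H) <=
  (reduced_norm i + reduced_norm i.+1) * site_dist i H.
Proof.
apply: le_mul_inf; first by rewrite addr_ge0 ?reduced_norm_ge0.
  (* the infimum ranges over a nonempty set: 0 acts trivially on every site *)
  exists (opnorm (H - 0)), 0 => //; split.
    by apply/matrixP => p q; rewrite !mxE rmorph0.
  by exists (fun _ _ => 0); split => // x y; rewrite /entry mxE mulr0.
move=> _ [Hi [_ Hi_trivial] <-]; rewrite -ReB.
have -> : pairing X i H - pairing X i.+1 H = pairing X i (H - Hi) - pairing X i.+1 (H - Hi).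
  by rewrite !pairingB (pairing_acts_trivially X Hi_trivial); ring.
rewrite ReB mulrDl; apply: lerD.
  exact: le_trans (ler_norm _) (pairing_bound _ (ltnW (ltn_ord i))).
rewrite -ReN; apply: le_trans (ler_norm _) _.
by rewrite ReN normrN pairing_bound.
Qed.

Lemma trace_lipschitz_bound (H : Op R n d) : lipschitz H <= 1 ->
  complex.Re (\tr (X *m H)) <= \sum_(k < n) reduced_norm k.
Proof.
move=> H_lip; pose g k := complex.Re (pairing X k H).
have telescope : \sum_(i < n) (g i - g i.+1) = g 0 - g n.
  rewrite -(big_mkord xpredT (fun i => g i - g i.+1)).
  rewrite (telescope_sumr_eq (fun k => - g k)) // => [|k _]; last by rewrite opprK addrC.
  by rewrite opprK addrC.
have trace_XH : complex.Re (\tr (X *m H)) = \sum_(i < n) (g i - g i.+1).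
  by rewrite telescope /g pairing_last // pairing0 subr0.
rewrite trace_XH; apply: le_trans (sum_avg_consecutive_le (g := reduced_norm) _) => /=.
  apply: ler_sum => i _; apply: le_trans (pairing_step H i) _.
  rewrite ler_wpM2l ?addr_ge0 ?reduced_norm_ge0 // -[_^-1]mul1r ler_pdivlMr // mulrC.
  exact: le_trans (site_dist_le_lipschitz i H) H_lip.
by rewrite /reduced_norm leqnn reduced_norm_ge0.
Qed.

End Telescoping.

(* sum_{k<n} T_k equals the right-hand side of the theorem when n > 0, and
   is 0 <= ||X||_1 when n = 0. *)
Lemma sum_reduced_norm_le (R : realType) n d (X : Op R n d) :
  \sum_(k < n) reduced_norm X k <= trnorm X + \sum_(k < n.-1) trnorm (ptrace k.+1 X).
Proof.
case: n X => [|m] Y /=; first by rewrite !big_ord0 addr0 trnorm_ge0.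
rewrite big_ord_recl /reduced_norm /= lerD2l.
by under eq_bigr do rewrite /bump leq0n add1n ltnS leqNgt ltn_ord /=.
Qed.

Theorem mainTheorem8 (R : realType) (n d : nat) (X : Op R n d) :
  selfadj X -> \tr X = 0 ->
  W1norm X <= trnorm X + \sum_(k < n.-1) trnorm (ptrace k.+1 X).
Proof.
move=> _ trX; apply: le_trans (sum_reduced_norm_le X); rewrite /W1norm.
set S := (X in sup X).
have [[y Sy]|S0] := pselect (S !=set0); last first.
  by rewrite sup_out => [|[]//]; rewrite sumr_ge0 // => k _; apply: reduced_norm_ge0.
apply: ge_sup; first by exists y.
by move=> _ [H [_ H_lip] <-]; apply: trace_lipschitz_bound.
Qed.
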